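(* Let $b\ge1$ and let $q=(q_1,q_2,\ldots,q_k)$ be an ordered partition of $b$ (so $k\ge 1$). The number of ways $q$ can be embedded into an ordered partition of $b$ (counting all nontrivial embeddings of $q$ into all ordered partitions $r$ of $b$, plus the one trivial embedding of $q$ into itself) is \[ 1+\frac{q_1+2k-2}{q_1+k-1}\binom{q_1+k-1}{k-1}2^{q_1-1}. \] Equivalently, this is the number of cards for $b$ balls whose left partition is $q$.
   Context: For an integer $b\ge 0$, an ordered partition of $b$ is a finite sequence $(q_1,\ldots,q_k)$ of positive integers summing to $b$ (for $b=0$ the only one is the empty sequence). An ordered partition $(q_1,\ldots,q_k)$ with $k\ge1$ is nontrivially embedded into an ordered partition $(r_1,\ldots,r_\ell)$ by a choice of indices $1\le i_2<i_3<\cdots<i_k\le \ell$ with $q_j\le r_{i_j}$ for $2\le j\le k$; different index tuples count as different embeddings. The trivial embedding of $q$ into $r$ exists only when $q=r$. A card for $b$ balls is either (i) a trivial card, given by an ordered partition $q$ of $b$, whose left and right partitions are both $q$; or (ii) a throw card, given by ordered partitions $q=(q_1,\ldots,q_k)$ ($k\ge1$) and $r=(r_1,\ldots,r_\ell)$ of $b$ together with a nontrivial embedding $(i_2,\ldots,i_k)$ of $q$ into $r$; its left partition is $q$ and its right partition is $r$. Different index tuples give different cards, and a throw card is distinct from the trivial card even when $q=r$. *)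

From mathcomp Require Import all_boot all_order all_algebra.
Set Implicit Arguments. Unset Strict Implicit. Unset Printing Implicit Defensive.

Definition is_opart (b : nat) (r : seq nat) : bool :=
  all (fun x => 0 < x) r && (sumn r == b).

Fixpoint nseqs (n : nat) (s : seq nat) : seq (seq nat) :=
  if n is n'.+1 then [seq x :: t | x <- s, t <- nseqs n' s] else [:: [::]].

(* All sequences of length <= b with entries in {0..b}; every ordered partition
   of b occurs exactly once among them. *)
Definition bounded_seqs (b : nat) : seq (seq nat) :=
  flatten [seq nseqs n (iota 0 b.+1) | n <- iota 0 b.+1].

Definition oparts (b : nat) : seq (seq nat) :=
  [seq r <- bounded_seqs b | is_opart b r].

(* Nontrivial embeddings of q = (q_1, q_2, ..., q_k) into r = (r_1, ..., r_l):
   index tuples (i_2 < ... < i_k) of indices of r with q_j <= r_{i_j}.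
   Indices are 0-based here: the tuple t has entries in 'I_(size r), and
   tnth t j corresponds to i_{j+2}, matched with q_{j+2} = nth 0 (behead q) j. *)
Definition nt_embeddings (q r : seq nat) : {set (size (behead q)).-tuple 'I_(size r)} :=
  [set t : (size (behead q)).-tuple 'I_(size r) |
     sorted ltn (map val t) &&
     [forall j : 'I_(size (behead q)), nth 0 (behead q) j <= nth 0 r (tnth t j)]].

Definition num_embeddings (b : nat) (q : seq nat) : nat :=
  1 + \sum_(r <- oparts b) #|nt_embeddings q r|.

From mathcomp Require Import all_boot all_order all_algebra zify.
Import GRing.Theory Num.Theory.

(* Write q = q_1 :: p.  A nontrivial embedding of q into r is an increasing list of
   positions of r carrying the parts of p, so the count is 1 + sum_(r |= b) e(p, r).
   Splitting off the first part of r gives e(a :: p, x :: r) = [a <= x] e(p, r) +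
   e(a :: p, r), and summing over the ordered partitions r of n shows that
   sum_(r |= n) e(p, r) depends only on the slack t = n - sumn p and on m = size p:
   both it and F(t, m) = 2^(t-1) (C(t+m, m) + C(t-1+m, t)) (with F(0, m) = 1) satisfy
   the same recurrences.  For n = b the slack is q_1, and
   (t+1+m) F(t+1, m) = (t+1+2m) C(t+1+m, m) 2^t is the announced formula. *)

Lemma flatten_map_uniq (T U : eqType) (h : T -> seq U) (s : seq T) :
    uniq s -> {in s, forall x, uniq (h x)} ->
    {in s &, forall x y u, u \in h x -> u \in h y -> x = y} ->
  uniq (flatten (map h s)).
Proof.
elim: s => [|x s IH] //= /andP[xNs us] uh dj.
rewrite cat_uniq uh ?mem_head // IH //; first last.
- by move=> y z ys zs; apply: dj; rewrite inE ?ys ?zs orbT.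
- by move=> y ys; apply: uh; rewrite inE ys orbT.
rewrite andbT; apply/hasPn => u /flatten_mapP[y ys uy]; apply/negP => ux.
by move: xNs; rewrite (dj x y _ _ u) ?mem_head ?inE ?ys ?orbT.
Qed.

Lemma mem_nseqs n s t : (t \in nseqs n s) = (size t == n) && all (fun x => x \in s) t.
Proof.
elim: n t => [|n IH] t /=; first by case: t.
apply/allpairsP/idP => [[[x u]] /= [xs]|].
- by rewrite IH => /andP[/eqP <- ut] ->; rewrite /= eqxx xs.
- case: t => [|x t] //=; rewrite eqSS andbCA -IH => /andP[xs tn].
  by exists (x, t).
Qed.

Lemma nseqs_uniq n s : uniq s -> uniq (nseqs n s).
Proof.
move=> us; elim: n => //= n IH.
by apply: allpairs_uniq => // -[x t] [y u] _ _ [-> ->].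
Qed.

Lemma oparts_uniq n : uniq (oparts n).
Proof.
apply/filter_uniq/flatten_map_uniq; first exact: iota_uniq.
- by move=> k _; apply/nseqs_uniq/iota_uniq.
- by move=> k l _ _ t; rewrite !mem_nseqs => /andP[/eqP <- _] /andP[/eqP <-].
Qed.

Lemma size_le_sumn r : all (leq 1) r -> size r <= sumn r.
Proof. by elim: r => //= x r IH /andP[x_gt0 /IH]; lia. Qed.

Lemma mem_le_sumn r x : x \in r -> x <= sumn r.
Proof. by elim: r => //= y r IH; rewrite inE => /orP[/eqP->|/IH]; lia. Qed.

Lemma mem_oparts n r : (r \in oparts n) = is_opart n r.
Proof.
rewrite mem_filter andb_idr // => /andP[r_pos /eqP r_sum].
apply/flatten_mapP; exists (size r).
  by rewrite mem_iota ltnS -r_sum size_le_sumn.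
rewrite mem_nseqs eqxx; apply/allP => x xr.
by rewrite mem_iota ltnS -r_sum mem_le_sumn.
Qed.

Lemma oparts0 : oparts 0 = [:: [::]].
Proof. by []. Qed.

Lemma perm_oparts_first_part n :
  perm_eq (oparts n.+1) [seq (n.+1 - j) :: r | j <- iota 0 n.+1, r <- oparts j].
Proof.
apply: uniq_perm; first exact: oparts_uniq.
  apply: flatten_map_uniq; first exact: iota_uniq.
    by move=> j _; rewrite map_inj_uniq ?oparts_uniq // => r1 r2 [].
  move=> i j; rewrite !mem_iota /= => ilt jlt u /mapP[r1 _ ->] /mapP[r2 _ [first_eq _]].
  lia.
move=> r; rewrite mem_oparts; apply/idP/allpairsPdep.
  case: r => [|x r] // /andP[/andP[x_gt0 r_pos] /eqP r_sum]; rewrite /= in r_sum.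
  exists (n.+1 - x), r; rewrite mem_iota mem_oparts.
  by split; [lia | apply/andP; split=> //; apply/eqP; lia | congr (_ :: _); lia].
case=> j [r' [jlt]]; rewrite mem_oparts mem_iota /= in jlt *.
case/andP=> r'_pos /eqP r'_sum ->; rewrite /is_opart /= r'_pos r'_sum.
by rewrite subn_gt0 jlt; apply/eqP; lia.
Qed.

Lemma sum_oparts_first_part n (F : seq nat -> nat) :
  \sum_(r <- oparts n.+1) F r =
  \sum_(0 <= j < n.+1) \sum_(r <- oparts j) F ((n.+1 - j) :: r).
Proof. by rewrite (perm_big _ (perm_oparts_first_part n)) big_allpairs_dep. Qed.

Lemma all2_map_r {S T U : Type} (R : S -> U -> bool) (f : T -> U) s t :
  all2 R s (map f t) = all2 (fun x y => R x (f y)) s t.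
Proof. by elim: s t => [|x s IH] [|y t] //=; rewrite IH. Qed.

Lemma all2_nthP {S T : Type} (x0 : S) (y0 : T) (R : S -> T -> bool) s t :
  size s = size t ->
  all2 R s t = [forall j : 'I_(size s), R (nth x0 s j) (nth y0 t j)].
Proof.
move=> st; rewrite all2E st eqxx /=.
apply/(all_nthP (x0, y0))/forallP => [Rst j | Rst i].
  by have := Rst j; rewrite size_zip st minnn nth_zip //; apply.
rewrite size_zip st minnn nth_zip // => i_lt.
by have := Rst (Ordinal i_lt).
Qed.

Definition is_embedding (p r s : seq nat) : bool :=
  [&& sorted ltn s, all (fun i => i < size r) s & all2 (fun a i => a <= nth 0 r i) p s].

Fixpoint embeddings (p r : seq nat) : seq (seq nat) :=
  match p, r with
  | [::], _ => [:: [::]]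
  | _ :: _, [::] => [::]
  | a :: p', x :: r' =>
      (if a <= x then [seq 0 :: map succn s | s <- embeddings p' r'] else [::])
      ++ [seq map succn s | s <- embeddings p r']
  end.

Lemma is_embedding_shift p x r s :
  is_embedding p (x :: r) (map succn s) = is_embedding p r s.
Proof. by rewrite /is_embedding sorted_map all_map all2_map_r. Qed.

Lemma is_embedding_cons0 a p x r s :
  is_embedding (a :: p) (x :: r) (0 :: map succn s) = (a <= x) && is_embedding p r s.
Proof.
rewrite /is_embedding /= (path_sortedE ltn_trans) !all_map sorted_map all2_map_r.
have -> : all (preim succn (ltn 0)) s by apply/allP.
by case: (a <= x); rewrite ?andbF.
Qed.

Lemma ltn_sorted_shift s :
  sorted ltn s -> exists t, s = map succn t \/ s = 0 :: map succn t.
Proof.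
have shiftK u : all (leq 1) u -> u = map succn (map predn u).
  by rewrite -map_comp => /allP u_pos; rewrite map_id_in // => -[|i] /u_pos.
case: s => [|i s]; first by exists [::]; left.
rewrite /= (path_sortedE ltn_trans) => /andP[s_gt _].
have s_pos : all (leq 1) s by apply: sub_all s_gt => j; apply: leq_ltn_trans.
case: i s_gt => [|i] _; first by exists (map predn s); right; rewrite -shiftK.
by exists (map predn (i.+1 :: s)); left; rewrite -shiftK //= s_pos.
Qed.

Lemma mem_embeddings p r s : (s \in embeddings p r) = is_embedding p r s.
Proof.
elim: r p s => [|x r IH] [|a p] s.
1-3: by case: s => [|i s]; rewrite /is_embedding /= ?andbF.
rewrite /= mem_cat; apply/idP/idP.
  case/orP; last by case/mapP=> t; rewrite IH => t_emb ->; rewrite is_embedding_shift.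
  case: ifP => // a_le /mapP[t]; rewrite IH => t_emb ->.
  by rewrite is_embedding_cons0 a_le.
move=> s_emb; have [t [s_shift|s_shift]] := ltn_sorted_shift _ (proj1 (andP s_emb)).
  by rewrite s_shift map_f ?orbT // IH -(is_embedding_shift _ x) -s_shift.
move: s_emb; rewrite s_shift is_embedding_cons0 => /andP[-> t_emb].
by rewrite map_f // IH.
Qed.

Lemma embeddings_uniq p r : uniq (embeddings p r).
Proof.
have shift_inj : injective (map succn) by apply/inj_map/succn_inj.
elim: r p => [|x r IH] [|a p] //=.
have shifted_uniq : uniq [seq map succn s | s <- embeddings (a :: p) r].
  by rewrite map_inj_uniq.
case: ifP => _ //=; rewrite cat_uniq shifted_uniq andbT.
rewrite map_inj_uniq ?IH => [|u v [/shift_inj //]].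
by apply/hasPn => _ /mapP[[|i u] _ ->]; apply/negP => /mapP[v _] /=[].
Qed.

Lemma size_embeddings_nil r : size (embeddings [::] r) = 1.
Proof. by case: r. Qed.

Lemma size_embeddings_cons a p x r :
  size (embeddings (a :: p) (x :: r)) =
  (a <= x) * size (embeddings p r) + size (embeddings (a :: p) r).
Proof. by rewrite /= size_cat size_map; case: (a <= x); rewrite ?size_map ?mul1n. Qed.

Lemma map_val_pmap_insub (T : Type) (P : pred T) (sT : subType P) (s : seq T) :
  all P s -> map val (pmap (insub : T -> option sT) s) = s.
Proof.
move=> s_P; rewrite (pmap_filter (@insubK _ _ sT)); apply/all_filterP.
by rewrite (eq_all (isSome_insub sT)).
Qed.

Lemma nt_embeddingsE q r t :
  (t \in nt_embeddings q r) = is_embedding (behead q) r (map val t).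
Proof.
rewrite inE /is_embedding all_map.
have -> : all (preim val (fun i => i < size r)) t by apply/allP => i _; exact: ltn_ord.
congr andb.
rewrite (all2_nthP 0 0) ?size_map ?size_tuple //; apply: eq_forallb => j.
by rewrite (nth_map (tnth t j)) ?size_tuple // -tnth_nth.
Qed.

Lemma card_nt_embeddings q r : #|nt_embeddings q r| = size (embeddings (behead q) r).
Proof.
rewrite cardE -(size_map (fun t => map val (tval t))); apply/perm_size/uniq_perm.
- by rewrite map_inj_uniq ?enum_uniq // => t u /(inj_map val_inj)/val_inj.
- exact: embeddings_uniq.
move=> s; rewrite mem_embeddings; apply/mapP/idP => [[t] | s_emb].
  by rewrite mem_enum nt_embeddingsE => ? ->.
case/and3P: (s_emb) => _ s_lt; rewrite all2E => /andP[/eqP s_size _].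
pose u : seq 'I_(size r) := pmap insub s.
have u_s : map val u = s by apply: map_val_pmap_insub.
have u_size : size u == size (behead q) by rewrite s_size -u_s size_map.
by exists (Tuple u_size); rewrite // mem_enum nt_embeddingsE /= u_s.
Qed.

Definition emb_total n p := \sum_(r <- oparts n) size (embeddings p r).

Lemma emb_total0 p : emb_total 0 p = (p == [::]).
Proof. by rewrite /emb_total oparts0 big_seq1; case: p. Qed.

Lemma emb_total_nil n : emb_total n.+1 [::] = \sum_(0 <= j < n.+1) emb_total j [::].
Proof.
rewrite /emb_total sum_oparts_first_part; apply: eq_bigr => j _.
by apply: eq_bigr => r _; rewrite !size_embeddings_nil.
Qed.

Lemma emb_total_cons n a p :
  emb_total n.+1 (a :: p) =
  \sum_(0 <= j < n.+1) ((a <= n.+1 - j) * emb_total j p + emb_total j (a :: p)).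
Proof.
rewrite /emb_total sum_oparts_first_part; apply: eq_bigr => j _.
by rewrite big_distrr -big_split; apply: eq_bigr => r _; rewrite size_embeddings_cons.
Qed.

Lemma sum_nat_shift (g : nat -> nat) n c :
  \sum_(0 <= j < n) (if c <= j then g (j - c) else 0) = \sum_(0 <= i < n - c) g i.
Proof.
elim: n => [|n IH]; first by rewrite !big_geq.
rewrite big_nat_recr //= IH; case: (leqP c n) => [c_le | n_lt].
  by rewrite subSn // big_nat_recr.
by rewrite addn0 !big_geq //; lia.
Qed.

Lemma sum_nat_leq_sub (h : nat -> nat) n a : 0 < a ->
  \sum_(0 <= j < n) (a <= n - j) * h j = \sum_(0 <= j < n.+1 - a) h j.
Proof.
move=> a_gt0; rewrite (big_nat_widen _ _ _ _ _ (_ : n.+1 - a <= n)); last by lia.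
rewrite [RHS]big_mkcond /=; apply: eq_big_nat => j j_lt.
have -> : (a <= n - j) = (j < n.+1 - a) by lia.
by case: ifP; rewrite ?mul1n.
Qed.

Definition slack_count t m :=
  if t is t'.+1 then 2 ^ t' * ('C(t'.+1 + m, m) + 'C(t' + m, t'.+1)) else 1.

Lemma slack_countSS t m :
  slack_count t.+1 m.+1 = 2 * slack_count t m.+1 + slack_count t.+1 m.
Proof.
case: t => [|t] /=.
  by rewrite add0n binSn bin1 addSn -addnS binSn bin1; lia.
rewrite expnS -!mulnA -mulnDr; congr (_ * _).
have := binS (t + m).+2 m; have := binS (t + m).+1 t.+1.
rewrite !(addSn, addnS); lia.
Qed.

Lemma slack_count_nil n : slack_count n.+1 0 = \sum_(0 <= j < n.+1) slack_count j 0.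
Proof.
elim: n => [|n IH]; first by rewrite big_nat1.
rewrite big_nat_recr //= -IH /= !addn0 !bin0 !bin_small // expnS; lia.
Qed.

Lemma slack_count_sum t m :
  slack_count t m.+1 =
  \sum_(0 <= i < t) slack_count i m.+1 + \sum_(0 <= i < t.+1) slack_count i m.
Proof.
elim: t => [|t IH]; first by rewrite big_geq // big_nat1.
rewrite slack_countSS !big_nat_recr //=; move: IH; rewrite big_nat_recr //=; lia.
Qed.

Lemma emb_total_closed n p : all (leq 1) p ->
  emb_total n p = if sumn p <= n then slack_count (n - sumn p) (size p) else 0.
Proof.
elim/ltn_ind: n p => -[|n] IH [|a p] p_pos.
- by rewrite emb_total0.
- by rewrite emb_total0 /=; case: ifP => //; move: p_pos => /= /andP[]; lia.
- rewrite emb_total_nil subn0 slack_count_nil; apply: eq_big_nat => j /andP[_ j_lt].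
  by rewrite IH // subn0.
move: p_pos => /= /andP[a_gt0 p_pos].
have IHj j : 0 <= j < n.+1 ->
    (a <= n.+1 - j) * emb_total j p + emb_total j (a :: p) =
    (a <= n.+1 - j) * (if sumn p <= j then slack_count (j - sumn p) (size p) else 0) +
    (if a + sumn p <= j then slack_count (j - (a + sumn p)) (size p).+1 else 0).
  by move=> j_lt; rewrite !IH //= a_gt0.
rewrite emb_total_cons (eq_big_nat _ _ IHj) big_split /= sum_nat_leq_sub //.
rewrite !(sum_nat_shift (slack_count^~ _)).
case: leqP => [sum_le | sum_gt]; last by rewrite !big_geq //; lia.
have -> : n.+2 - a - sumn p = (n.+1 - (a + sumn p)).+1 by lia.
by rewrite slack_count_sum addnC.
Qed.

Lemma mul_slack_count t m :
  (t.+1 + m) * slack_count t.+1 m = (t.+1 + 2 * m) * 'C(t.+1 + m, m) * 2 ^ t.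
Proof.
have bin_shift : (t.+1 + m) * 'C(t + m, t.+1) = m * 'C(t.+1 + m, m).
  case: m => [|m]; first by rewrite !addn0 bin_small ?muln0.
  rewrite -mul_bin_diag -bin_sub ?addnS ?addSn ?leq_addr //=.
  by rewrite subSS addKn.
rewrite /= mulnCA mulnDr bin_shift; lia.
Qed.

Lemma num_embeddings_closed t p : all (leq 1) p ->
  num_embeddings (t.+1 + sumn p) (t.+1 :: p) = 1 + slack_count t.+1 (size p).
Proof.
move=> p_pos; rewrite /num_embeddings (eq_bigr _ (fun r _ => card_nt_embeddings _ r)).
by rewrite -/(emb_total _ p) emb_total_closed // leq_addl addnK.
Qed.

Theorem lemma3 (b : nat) (q : seq nat) (hb : 1 <= b) (hq : is_opart b q) :
  ((num_embeddings b q)%:R : rat) =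
  (1 + ((head 0%N q + 2 * size q - 2)%:R / (head 0%N q + size q - 1)%:R)
         * ('C(head 0%N q + size q - 1, size q - 1))%:R
         * (2 ^ (head 0%N q - 1))%:R)%R.
Proof.
case: q hq => [|[|t] p] /andP[/= q_pos /eqP q_sum]; first by rewrite -q_sum in hb.
  by [].
rewrite -q_sum num_embeddings_closed //=.
set m := size p.
have -> : t.+1 + 2 * m.+1 - 2 = t.+1 + 2 * m by lia.
have -> : t.+1 + m.+1 - 1 = t.+1 + m by lia.
rewrite !subn1 /= natrD; congr (_ + _)%R.
have den_neq0 : ((t.+1 + m)%:R != 0 :> rat)%R by rewrite pnatr_eq0.
apply: (mulfI den_neq0); rewrite -natrM mul_slack_count !natrM.
by rewrite !mulrA [X in (X / _)%R]mulrC mulfK.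
Qed.
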